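(* Let $q>1$, $0<u<1$ and let $k\ge1$ be an integer. Then \[ \sum_{\lambda:\lambda'_1=k}N_{u,q}(\lambda)=\frac{u^{k-1}}{|A(k-1,q)|}\cdot\frac{\prod_{r=1}^\infty(1-u/q^r)}{\prod_{r=1}^k(1-u/q^r)}, \] the sum being over partitions with exactly $k$ parts.
   Context: $|A(k-1,q)|=q^{k-1}\prod_{i=0}^{k-2}(q^{k-1}-q^i)$ (the order of the affine group $A(k-1,q)$ when $q$ is a prime power). $\lambda'_1$ is the number of parts of $\lambda$. $N_{u,q}(\lambda)=\prod_{r\ge1}(1-u/q^r)\frac{u^{|\lambda|-1}(q^{\lambda'_1}-1)}{\prod_i q^{(\lambda'_i)^2}(\frac1q)_{m_i(\lambda)}}$ for partitions of positive integers, with $\lambda'$ the conjugate partition, $m_i(\lambda)$ the multiplicity of part $i$, $(\frac1q)_i=\prod_{j=1}^i(1-q^{-j})$. *)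

From HB Require Import structures.
From mathcomp Require Import all_boot all_order all_algebra.
From mathcomp Require Import all_classical all_reals all_analysis.
Set Implicit Arguments. Unset Strict Implicit. Unset Printing Implicit Defensive.
Import Order.TTheory GRing.Theory Num.Theory.
Local Open Scope ring_scope.

Definition is_partition (l : seq nat) : bool :=
  sorted geq l && all (fun x => 0 < x)%N l.

Definition psize (l : seq nat) : nat := sumn l.

Definition pconj (l : seq nat) (i : nat) : nat := count (fun x => i <= x)%N l.

Definition pmult (l : seq nat) (i : nat) : nat := count (pred1 i) l.

Definition qpoch (R : realType) (q : R) (i : nat) : R :=
  \prod_(1 <= j < i.+1) (1 - (q ^+ j)^-1).

Definition qinf (R : realType) (u q : R) : R :=
  limn (fun n => \prod_(1 <= r < n.+1) (1 - u / q ^+ r)).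

Definition affine_order (R : realType) (n : nat) (q : R) : R :=
  q ^+ n * \prod_(0 <= i < n) (q ^+ n - q ^+ i).

(* N_{u,q}(lambda); the product over i >= 1 is taken over 1 <= i <= |lambda|,
   all further factors being 1. *)
Definition Nuq (R : realType) (u q : R) (l : seq nat) : R :=
  qinf u q * (u ^+ (psize l).-1 * (q ^+ pconj l 1 - 1))
  / \prod_(1 <= i < (psize l).+1) (q ^+ (pconj l i ^ 2) * qpoch q (pmult l i)).

From HB Require Import structures.
From mathcomp Require Import all_boot all_order all_algebra.
From mathcomp Require Import all_classical all_reals all_analysis.
From mathcomp Require Import zify ring.
Set Implicit Arguments.
Unset Strict Implicit.
Unset Printing Implicit Defensive.
Import Order.TTheory GRing.Theory Num.Theory numFieldNormedType.Exports.
Local Open Scope classical_set_scope.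

(* Write x = 1/q.  For a partition with k parts, N_{u,q} is the constant
   (prod_r (1 - u/q^r)) (q^k - 1) / u times the weight
   u^|l| / prod_i q^(l'_i^2) (x;x)_{m_i(l)}.  Removing the k x s rectangle
   below the smallest part s of l leaves a partition v with fewer than k parts,
   and the weight of l is (u^k x^(k^2))^s / (x;x)_{k - size v} times that of v; summing
   the geometric series in s gives a recursion for the total weight F_k of
   partitions with k parts.  It is solved by
   F_k = u^k x^(k^2) / ((x;x)_k (ux;x)_k), by the finite identity
   sum_j [k j]_x u^j x^(j^2) (ux^(j+1);x)_(k-j) = 1, which follows from the
   q-Pascal rule by induction on k. *)

Definition add_rect (k s : nat) (v : seq nat) : seq nat :=
  map (addn s) v ++ nseq (k - size v) s.

Definition rect_decomp (l : seq nat) : nat * seq nat :=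
  (last 0 l, [seq y <- map (subn^~ (last 0 l)) l | 0 < y]).

Lemma geq_trans : transitive geq.
Proof. exact: rev_trans leq_trans. Qed.

Lemma size_add_rect k s v : size v <= k -> size (add_rect k s v) = k.
Proof. by move=> h; rewrite size_cat size_map size_nseq; lia. Qed.

Lemma psize_add_rect k s v : size v <= k ->
  psize (add_rect k s v) = k * s + psize v.
Proof.
move=> h; rewrite /psize sumn_cat sumn_nseq.
have -> : sumn (map (addn s) v) = size v * s + sumn v.
  by elim: v {h} => [|a v IH] //=; rewrite IH; lia.
rewrite mulnC; nia.
Qed.

Lemma pconj_add_rect_le k s v i : size v <= k -> i <= s ->
  pconj (add_rect k s v) i = k.
Proof.
move=> hk his; rewrite /pconj count_cat count_map count_nseq /= his mul1n.
rewrite (@eq_count _ _ predT) ?count_predT; first by lia.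
by move=> x /=; apply: leq_trans his (leq_addr _ _).
Qed.

Lemma pconj_add_rect_addn k s v i : 0 < i ->
  pconj (add_rect k s v) (i + s) = pconj v i.
Proof.
move=> hi; rewrite /pconj count_cat count_map count_nseq /=.
have -> : (i + s <= s) = false by lia.
by rewrite mul0n addn0; apply: eq_count => x /=; lia.
Qed.

Lemma pmult_add_rect_lt k s v i : i < s -> pmult (add_rect k s v) i = 0.
Proof.
move=> hi; rewrite /pmult count_cat count_map count_nseq /=.
have -> : (s == i) = false by lia.
by rewrite mul0n addn0 -(count_pred0 v); apply: eq_count => x /=; lia.
Qed.

Lemma pmult_add_rect_id k s v : all (fun x => 0 < x) v ->
  pmult (add_rect k s v) s = k - size v.
Proof.
move=> hv; rewrite /pmult count_cat count_map count_nseq /= eqxx mul1n.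
by rewrite (@eq_in_count _ _ pred0) ?count_pred0 // => x /(allP hv) /=; lia.
Qed.

Lemma pmult_add_rect_addn k s v i : 0 < i ->
  pmult (add_rect k s v) (i + s) = pmult v i.
Proof.
move=> hi; rewrite /pmult count_cat count_map count_nseq /=.
have -> : (s == i + s) = false by lia.
by rewrite mul0n addn0; apply: eq_count => x /=; apply/eqP/eqP; lia.
Qed.

Lemma is_partition_add_rect k s v : 0 < s -> is_partition v ->
  size v <= k -> is_partition (add_rect k s v).
Proof.
move=> hs /andP [hso hpos] hk; apply/andP; split.
  rewrite (sorted_pairwise geq_trans) pairwise_cat; apply/and3P; split.
  - by apply/allrelP => x y /mapP [z _ ->] /nseqP [-> _] /=; lia.
  - rewrite pairwise_map; move: hso; rewrite (sorted_pairwise geq_trans).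
    by apply: sub_pairwise => a b /=; lia.
  - by elim: (k - size v) => //= n ->; rewrite andbT all_nseq /= leqnn orbT.
rewrite all_cat all_nseq hs orbT andbT all_map.
by apply/allP => x _ /=; lia.
Qed.

Lemma rect_decomp_add_rect k s v : all (fun x => 0 < x) v -> size v < k ->
  rect_decomp (add_rect k s v) = (s, v).
Proof.
move=> hpos hk; rewrite /rect_decomp.
have -> : last 0 (add_rect k s v) = s.
  rewrite last_cat; have -> : (k - size v = (k - size v).-1.+1) by lia.
  by elim: (k - size v).-1 (last 0 _) => //= n IH x; apply: IH.
congr pair; rewrite map_cat -map_comp map_nseq subnn filter_cat filter_nseq /=.
rewrite cats0 (@eq_map _ _ _ id) ?map_id; last by move=> x /=; lia.
exact/all_filterP.
Qed.

Lemma path_geq_last_le a l : path geq a l -> forall x, x \in a :: l -> last a l <= x.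
Proof.
elim: l a => [|b l IH] a /=; first by move=> _ x; rewrite inE => /eqP ->.
move=> /andP [hab hp] x; rewrite inE => /orP [/eqP ->|]; last exact: IH hp x.
exact: leq_trans (IH _ hp b (mem_head _ _)) hab.
Qed.

Lemma sorted_geq_zeros_tail (m : seq nat) : sorted geq m ->
  m = [seq y <- m | 0 < y] ++ nseq (count_mem 0 m) 0.
Proof.
elim: m => [|[|a] m IH] //= hp; have hs := path_sorted hp; last by rewrite -IH.
have hz : [seq y <- m | 0 < y] = [::].
  apply/eqP; rewrite -[_ == _]negbK -has_filter; apply/hasPn => y.
  by move/(allP (order_path_min geq_trans hp)) => /=; lia.
by rewrite hz /= add0n {1}(IH hs) hz.
Qed.

Definition parts_eq (k : nat) : set (seq nat) :=
  [set l | is_partition l /\ size l = k].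

Lemma add_rect_rect_decomp k l s v : 0 < k -> parts_eq k l ->
  rect_decomp l = (s, v) ->
  [/\ 0 < s, is_partition v, size v < k & add_rect k s v = l].
Proof.
move=> hk [/andP [hso hpos] hsz] [<- <-] {s v}.
case: l hso hpos hsz => [|a l'] hso hpos hsz; first by rewrite -hsz in hk.
set s := last 0 (a :: l').
have hsin : s \in a :: l' by exact: mem_last.
have hge : forall x, x \in a :: l' -> s <= x by exact: path_geq_last_le.
set m := map (subn^~ s) (a :: l').
have hmso : sorted geq m by apply: (homo_sorted _ _ hso) => x y /=; lia.
have hdec := sorted_geq_zeros_tail hmso.
set v := [seq y <- m | 0 < y] in hdec *.
have hc : 0 < count_mem 0 m.
  by rewrite -has_count has_pred1; apply/mapP; exists s => //; lia.
have hsize : size (a :: l') = size v + count_mem 0 m.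
  by rewrite -(size_map (subn^~ s)) -/m {1}hdec size_cat size_nseq.
have hl : a :: l' = map (addn s) m.
  by rewrite /m -map_comp map_id_in // => x /hge /=; lia.
split.
- exact: allP hpos _ hsin.
- by rewrite /is_partition (sorted_filter geq_trans _ hmso) filter_all.
- by rewrite -hsz hsize -[X in (X < _)]addn0 ltn_add2l.
- by rewrite /add_rect [RHS]hl [in RHS]hdec map_cat map_nseq addn0 -hsz hsize addKn.
Qed.

Lemma add_rect_bij k : 0 < k ->
  set_bij ([set s | 0 < s] `*`` fun=> \bigcup_(j in `I_k) parts_eq j)
          (parts_eq k) (fun p => add_rect k p.1 p.2).
Proof.
move=> hk; split.
- move=> [s v] /= [hs [j hj [hv hsz]]]; rewrite /parts_eq /= -hsz in hj *.
  by split; [apply: is_partition_add_rect | apply: size_add_rect] => //; apply: ltnW.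
- move=> [s v] [s' v'] /set_mem /= [_ [j hj [/andP [_ hv] hsz]]].
  move=> /set_mem /= [_ [j' hj' [/andP [_ hv'] hsz']]] /= he.
  rewrite /= -hsz in hj; rewrite /= -hsz' in hj'.
  by rewrite -(rect_decomp_add_rect s hv hj) -(rect_decomp_add_rect s' hv' hj') he.
- move=> l hl; case hd: (rect_decomp l) => [s v].
  have [hs hv hsz <-] := add_rect_rect_decomp hk hl hd.
  by exists (s, v) => //; split => //; exists (size v).
Qed.

Lemma pconj1 l : is_partition l -> pconj l 1 = size l.
Proof. by move=> /andP [_ h]; apply/eqP; rewrite -all_count. Qed.

Lemma parts_eqE k : parts_eq k = [set l | is_partition l /\ pconj l 1 = k].
Proof. by apply/seteqP; split=> l [hl <-]; split; rewrite ?pconj1. Qed.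

Lemma trivIset_parts_eq : trivIset setT parts_eq.
Proof. by move=> i j _ _ [v [[_ <-] [_ <-]]]. Qed.

Lemma psize_gt0 k l : 0 < k -> parts_eq k l -> 0 < psize l.
Proof.
case: l => [|a l] hk [/andP [_ hpos] hsz]; first by rewrite -hsz in hk.
by move: hpos => /andP [ha _]; rewrite /psize /= ltn_addr.
Qed.

Local Open Scope ring_scope.

Section Weight.
Variables (R : realType) (q u : R).

Definition pdenom (l : seq nat) (N : nat) : R :=
  \prod_(1 <= i < N.+1) (q ^+ (pconj l i ^ 2) * qpoch q (pmult l i)).

Definition pweight (l : seq nat) : R := u ^+ psize l / pdenom l (psize l).

Lemma qpoch0 : qpoch q 0 = 1.
Proof. by rewrite /qpoch big_geq. Qed.

Lemma count_gt_psize (p : pred nat) l :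
  (forall x, p x -> (psize l < x)%N) -> count p l = 0%N.
Proof.
move=> hp; rewrite -(count_pred0 l); apply: eq_in_count => x hx /=.
apply/negbTE/negP => /hp; rewrite ltnNge /psize.
by elim: l hx {hp} => //= a l IH; rewrite inE => /orP [/eqP ->|/IH]; lia.
Qed.

Lemma pdenom_psize l N : (psize l <= N)%N -> pdenom l N = pdenom l (psize l).
Proof.
move=> h; rewrite -(subnKC h); elim: (N - psize l)%N => [|n IH]; first by rewrite addn0.
rewrite addnS /pdenom big_nat_recr /= -/(pdenom l (psize l + n)) ?IH; last by lia.
rewrite /pconj /pmult !count_gt_psize => [|x /= /eqP ->|x /=]; try lia.
by rewrite expr0 mul1r qpoch0 !mulr1.
Qed.

Lemma pdenom_add_rect k s v : (0 < k)%N -> (0 < s)%N -> all (fun x => 0 < x)%N v ->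
  (size v <= k)%N ->
  pdenom (add_rect k s v) (psize (add_rect k s v))
  = (q ^+ (k ^ 2)) ^+ s * qpoch q (k - size v) * pdenom v (psize v).
Proof.
move=> hk0 hs hpos hk; rewrite psize_add_rect //; set N := (k * s + psize v)%N.
have hsN : (s <= N)%N by rewrite /N; nia.
rewrite /pdenom (@big_cat_nat _ _ _ s) //=; last lia.
rewrite (@big_ltn _ _ _ s N.+1); last lia.
rewrite -(add1n s) big_addn.
rewrite (eq_big_nat _ _ (F2 := fun _ => q ^+ (k ^ 2))); last first.
  move=> i hi; rewrite pconj_add_rect_le //; last lia.
  by rewrite pmult_add_rect_lt ?qpoch0 ?mulr1 //; lia.
rewrite prodr_const_nat pconj_add_rect_le // pmult_add_rect_id //.
rewrite (eq_big_nat _ _ (F2 := fun i => q ^+ (pconj v i ^ 2) * qpoch q (pmult v i))); last first.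
  by move=> i hi; rewrite pconj_add_rect_addn ?pmult_add_rect_addn //; lia.
have -> : (N.+1 - s = (N - s).+1)%N by lia.
rewrite -/(pdenom v (N - s)) pdenom_psize; last by rewrite /N; nia.
case: s hs {hsN N} => [|s] // _; rewrite subSS subn0 exprS /pdenom; ring.
Qed.

Lemma pweight_add_rect k s v : (0 < k)%N -> (0 < s)%N -> all (fun x => 0 < x)%N v ->
  (size v <= k)%N ->
  pweight (add_rect k s v)
  = (u ^+ k / q ^+ (k ^ 2)) ^+ s / qpoch q (k - size v) * pweight v.
Proof.
move=> hk0 hs hpos hk; rewrite /pweight pdenom_add_rect // psize_add_rect //.
by rewrite exprD exprM expr_div_n !invfM; ring.
Qed.

End Weight.

Section QBinomial.
Variables (R : comRingType) (x : R).

Definition qfact (n : nat) : R := \prod_(1 <= i < n.+1) (1 - x ^+ i).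

Definition qrange (u : R) (m n : nat) : R := \prod_(m.+1 <= r < n.+1) (1 - u * x ^+ r).

Fixpoint qbinom (k j : nat) : R :=
  match k, j with
  | 0, 0 => 1
  | 0, _.+1 => 0
  | _.+1, 0 => 1
  | k'.+1, j'.+1 => qbinom k' j'.+1 + x ^+ (k' - j') * qbinom k' j'
  end.

Lemma qbinom0 k : qbinom k 0 = 1.
Proof. by case: k. Qed.

Lemma qbinom_gt k j : (k < j)%N -> qbinom k j = 0.
Proof.
elim: k j => [|k IH] [|j] //= h.
by rewrite !IH ?mulr0 ?addr0 //; lia.
Qed.

Lemma qbinom_id k : qbinom k k = 1.
Proof. by elim: k => //= k ->; rewrite qbinom_gt // subnn expr0 mulr1 add0r. Qed.

Lemma qfact0 : qfact 0 = 1.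
Proof. by rewrite /qfact big_geq. Qed.

Lemma qfactS n : qfact n.+1 = qfact n * (1 - x ^+ n.+1).
Proof. by rewrite /qfact big_nat_recr. Qed.

Lemma qbinom_qfact k j : (j <= k)%N ->
  qbinom k j * qfact j * qfact (k - j) = qfact k.
Proof.
elim: k j => [|k IH] [|j] //= hj; rewrite ?qfact0 ?mul1r ?subn0 //.
have [hjk|hkj] := ltnP j k; last first.
  have -> : j = k by lia.
  by rewrite qbinom_gt // !subnn expr0 mul1r add0r qbinom_id mul1r qfact0 mulr1.
have e : (k - j = (k - j.+1).+1)%N by lia.
have ex : x ^+ (k - j) * x ^+ j.+1 = x ^+ k.+1.
  by rewrite -exprD; congr (_ ^+ _); lia.
rewrite subSS [qfact k.+1]qfactS -ex.
transitivity (qbinom k j.+1 * qfact j.+1 * qfact (k - j.+1) * (1 - x ^+ (k - j))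
  + x ^+ (k - j) * (qbinom k j * qfact j * qfact (k - j)) * (1 - x ^+ j.+1)).
  by rewrite e !qfactS -e; ring.
by rewrite IH // IH 1?ltnW //; ring.
Qed.

Lemma qrange_id u n : qrange u n n = 1.
Proof. by rewrite /qrange big_geq. Qed.

Lemma qrangeS u m n : (m <= n)%N -> qrange u m n.+1 = qrange u m n * (1 - u * x ^+ n.+1).
Proof. by move=> h; rewrite /qrange big_nat_recr. Qed.

Lemma qrangeSS u m n : qrange u m.+1 n.+1 = qrange (u * x) m n.
Proof.
rewrite /qrange -addn1 big_addn subn1 /=; apply: eq_big_nat => r _.
by rewrite addn1 exprS mulrA.
Qed.

Lemma qrange_cat u m n p : (m <= n <= p)%N ->
  qrange u m p = qrange u m n * qrange u n p.
Proof. by move=> /andP [hmn hnp]; rewrite /qrange -big_cat_nat. Qed.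

Lemma qbinom_cauchy k u :
  \sum_(0 <= j < k.+1) qbinom k j * (u ^+ j * x ^+ (j ^ 2) * qrange u j k) = 1.
Proof.
elim: k u => [|k IH] u; first by rewrite big_nat1 qrange_id !mul1r.
(* The q-Pascal rule splits the sum into the instances at [u] and at [u * x]. *)
pose t u k j := u ^+ j * x ^+ (j ^ 2) * qrange u j k.
have lower : \sum_(0 <= j < k.+2) qbinom k j * t u k.+1 j
    = (1 - u * x ^+ k.+1) * \sum_(0 <= j < k.+1) qbinom k j * t u k j.
  rewrite big_nat_recr //= qbinom_gt // mul0r addr0 mulr_sumr.
  by apply: eq_big_nat => j /andP [_ hj]; rewrite /t qrangeS 1?ltnSE //; ring.
have upper : \sum_(0 <= j < k.+1) x ^+ (k - j) * qbinom k j * t u k.+1 j.+1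
    = u * x ^+ k.+1 * \sum_(0 <= j < k.+1) qbinom k j * t (u * x) k j.
  rewrite mulr_sumr; apply: eq_big_nat => j /andP [_ hj].
  have e : x ^+ (k - j) * x ^+ (j.+1 ^ 2) = x ^+ k.+1 * x ^+ j * x ^+ (j ^ 2).
    by rewrite -!exprD; congr (_ ^+ _); nia.
  rewrite /t qrangeSS exprMn exprS.
  transitivity (u * u ^+ j * (x ^+ (k - j) * x ^+ (j.+1 ^ 2))
                * qbinom k j * qrange (u * x) j k).
    by ring.
  by rewrite e; ring.
rewrite big_nat_recl // qbinom0 /t in lower; rewrite /t in upper.
rewrite big_nat_recl //=; under eq_big_nat => i _ do rewrite mulrDl.
by rewrite big_split /= addrA lower upper !IH; ring.
Qed.

End QBinomial.

Section QTerm.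
Variables (F : fieldType) (x : F).
Hypothesis qfact_neq0 : forall n, qfact x n != 0.

Definition qterm (u : F) (j : nat) : F :=
  u ^+ j * x ^+ (j ^ 2) / (qfact x j * qrange x u 0 j).

Lemma sum_qterm u k : (forall n, qrange x u 0 n != 0) ->
  \sum_(0 <= j < k.+1) qterm u j / qfact x (k - j) = (qfact x k * qrange x u 0 k)^-1.
Proof.
move=> qrange_neq0; have hP : qfact x k * qrange x u 0 k != 0 by rewrite mulf_neq0.
apply: (mulIf hP); rewrite mulVf // mulr_suml -[RHS](qbinom_cauchy x k u).
apply: eq_big_nat => j /andP [_ hj]; rewrite ltnS in hj.
rewrite /qterm -(qbinom_qfact x hj) (@qrange_cat _ x u 0 j k) //.
by field; rewrite ?qfact_neq0 ?qrange_neq0.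
Qed.

Lemma qterm_rec u k : (forall n, qrange x u 0 n != 0) ->
  (1 - u ^+ k * x ^+ (k ^ 2)) * qterm u k
  = u ^+ k * x ^+ (k ^ 2) * \sum_(0 <= j < k) qterm u j / qfact x (k - j).
Proof.
move=> qrange_neq0; have := sum_qterm k qrange_neq0.
rewrite big_nat_recr //= subnn qfact0 divr1 => /(canRL (addrK _)) ->.
by rewrite /qterm; field; rewrite ?qfact_neq0 ?qrange_neq0.
Qed.

End QTerm.

Section ExtendedSums.
Variable R : realType.
Local Open Scope ereal_scope.

Lemma esumZl (T : choiceType) (S : set T) (a : T -> \bar R) (c : R) :
  (0 <= c)%R -> (forall i, S i -> 0 <= a i) ->
  \esum_(i in S) (c%:E * a i) = c%:E * \esum_(i in S) a i.
Proof.
move=> c0 a0; rewrite /esum -ereal_supZl //; last first.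
  by apply/set0P; exists 0, set0; [exact: fsets_set0 | exact: fsbig_set0].
congr ereal_sup; rewrite image_comp /=; apply: eq_imagel => A [finA AS] /=.
rewrite !fsbig_finite // !big_seq ge0_sume_distrr // => i.
by rewrite in_fset_set // inE => /AS /a0.
Qed.

Lemma esum_II (a : nat -> \bar R) n : (forall i, 0 <= a i) ->
  \esum_(i in `I_n) a i = \sum_(0 <= i < n) a i.
Proof.
move=> a0; rewrite esum_fset; [by rewrite -fsbig_ord big_mkord | exact: finite_II | by []].
Qed.

Lemma esum_geometric_pos (c : R) : (0 <= c < 1)%R ->
  \esum_(s in [set s : nat | (0 < s)%N]) (c ^+ s)%:E = (c / (1 - c))%:E.
Proof.
move=> /andP [c0 c1].
have hsucc : set_bij [set: nat] [set s | (0 < s)%N] succn.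
  by split=> [n _ //|m n _ _ []|[|n] //= _]; [|exists n].
rewrite (reindex_esum _ _ _ _ hsucc) -nneseries_esumT; last first.
  by move=> n; rewrite lee_fin exprn_ge0.
have -> : (fun n => \sum_(0 <= i < n) (c ^+ i.+1)%:E) = EFin \o series (geometric c c).
  apply/funext => n /=; rewrite sumEFin /series /=; congr EFin.
  by apply: eq_bigr => i _; rewrite /geometric /= exprS.
have hc : (`|c| < 1)%R by rewrite ger0_norm.
rewrite EFin_lim; last exact: is_cvg_geometric_series.
by congr EFin; apply: (cvg_lim _ (@cvg_geometric_series R c c hc)).
Qed.

End ExtendedSums.

(* Both sides equal [\prod_(0 <= i < n.+1) (q ^+ n.+1 - q ^+ i)]. *)
Lemma affine_orderE (R : realType) (q : R) n : q != 0 ->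
  (q ^+ n.+1 - 1) * affine_order n q = q ^+ (n.+1 ^ 2) * qpoch q n.+1.
Proof.
move=> q_neq0; rewrite /affine_order.
have -> : q ^+ n * \prod_(0 <= i < n) (q ^+ n - q ^+ i)
    = \prod_(1 <= i < n.+1) (q ^+ n.+1 - q ^+ i).
  rewrite big_add1 /= -{1}(subn0 n) -prodr_const_nat -big_split /=.
  by apply: eq_bigr => i _; rewrite !exprS; ring.
rewrite -[q ^+ n.+1 - 1]/(q ^+ n.+1 - q ^+ 0).
rewrite -(@big_ltn _ _ _ 0 n.+1 (fun i => q ^+ n.+1 - q ^+ i)) //.
have -> : q ^+ (n.+1 ^ 2) = \prod_(1 <= j < n.+2) q ^+ n.+1.
  by rewrite prodr_const_nat -exprM; congr (_ ^+ _); rewrite subn1 /= expnS expn1.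
rewrite /qpoch -big_split /= big_add1 /= big_nat_rev /=.
apply: eq_big_nat => i /andP [_ hi].
have -> : (0 + n.+1 - i.+1 = n - i)%N by lia.
have -> : q ^+ n.+1 = q ^+ (n - i) * q ^+ i.+1 by rewrite -exprD; congr (_ ^+ _); lia.
by rewrite mulrBr mulr1 -mulrA mulfV ?mulr1 // expf_neq0.
Qed.

Section PartitionSums.
Variables (R : realType) (q u : R).
Hypotheses (q_gt1 : 1 < q) (u_gt0 : 0 < u) (u_lt1 : u < 1).

Let x := q^-1.

Lemma q_gt0 : 0 < q.
Proof. exact: lt_trans ltr01 q_gt1. Qed.

Lemma x_gt0 : 0 < x.
Proof. by rewrite invr_gt0 q_gt0. Qed.

Lemma x_lt1 : x < 1.
Proof. by rewrite invf_lt1 // q_gt0. Qed.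

Lemma qpoch_qfact n : qpoch q n = qfact x n.
Proof. by apply: eq_bigr => i _; rewrite exprVn. Qed.

Lemma qrange_qinv m n : qrange x u m n = \prod_(m.+1 <= r < n.+1) (1 - u / q ^+ r).
Proof. by apply: eq_bigr => r _; rewrite exprVn. Qed.

Lemma qfact_gt0 n : 0 < qfact x n.
Proof.
rewrite /qfact big_seq_cond; apply: prodr_gt0 => i /andP [+ _].
rewrite mem_index_iota subr_gt0 exprn_ilt1 ?ltW ?x_gt0 ?x_lt1 //; lia.
Qed.

Lemma qrange_gt0 m n : 0 < qrange x u m n.
Proof.
apply: prodr_gt0 => r _; rewrite subr_gt0; apply: le_lt_trans u_lt1.
by rewrite ler_piMr ?exprn_ile1 ?ltW ?x_gt0 ?x_lt1.
Qed.

Lemma qpoch_gt0 n : 0 < qpoch q n.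
Proof. by rewrite qpoch_qfact qfact_gt0. Qed.

Lemma pweight_ge0 l : 0 <= pweight q u l.
Proof.
rewrite divr_ge0 ?exprn_ge0 ?ltW //.
by apply: prodr_gt0 => i _; rewrite mulr_gt0 ?exprn_gt0 ?qpoch_gt0 ?q_gt0.
Qed.

Lemma qterm_ge0 j : 0 <= qterm x u j.
Proof.
by rewrite divr_ge0 ?mulr_ge0 ?exprn_ge0 ?ltW ?x_gt0 ?qfact_gt0 ?qrange_gt0.
Qed.

Lemma rect_ratio_ge0 k : 0 <= u ^+ k * x ^+ (k ^ 2).
Proof. by rewrite mulr_ge0 ?exprn_ge0 ?ltW ?x_gt0. Qed.

Lemma rect_ratio_lt1 k : (0 < k)%N -> u ^+ k * x ^+ (k ^ 2) < 1.
Proof.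
move=> hk; have hx : x ^+ (k ^ 2) <= 1 by rewrite exprn_ile1 ?ltW ?x_gt0 ?x_lt1.
apply: le_lt_trans (ler_piMr (exprn_ge0 k (ltW u_gt0)) hx) _.
by rewrite exprn_ilt1 ?ltW // -lt0n.
Qed.

Definition pweight_sum (k : nat) : \bar R := \esum_(l in parts_eq k) (pweight q u l)%:E.

Lemma pweight_sum0 : pweight_sum 0 = (qterm x u 0)%:E.
Proof.
rewrite /pweight_sum.
have -> : parts_eq 0 = [set [::]] by apply/seteqP; split=> [[|a l] []|_ ->].
rewrite esum_set1 ?lee_fin ?pweight_ge0 //.
by rewrite /pweight /pdenom /qterm /qfact /qrange /psize /= !big_geq // !mul1r invr1.
Qed.

Lemma esum_parts_lt k : (forall j, (j < k)%N -> pweight_sum j = (qterm x u j)%:E) ->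
  \esum_(v in \bigcup_(j in `I_k) parts_eq j) (pweight q u v / qpoch q (k - size v))%:E
  = (\sum_(0 <= j < k) qterm x u j / qpoch q (k - j))%:E.
Proof.
move=> IH; rewrite esum_bigcupT; first last.
- by move=> v; rewrite lee_fin divr_ge0 ?pweight_ge0 ?ltW ?qpoch_gt0.
- exact: trivIset_parts_eq.
rewrite -sumEFin -esum_II; last first.
  by move=> j; rewrite lee_fin divr_ge0 ?qterm_ge0 ?ltW ?qpoch_gt0.
apply: eq_esum => j /= hj.
transitivity (\esum_(v in parts_eq j) ((qpoch q (k - j))^-1%:E * (pweight q u v)%:E))%E.
  by apply: eq_esum => v [_ <-]; rewrite -EFinM mulrC.
rewrite esumZl ?invr_ge0 ?ltW ?qpoch_gt0 //; last by move=> v _; rewrite lee_fin pweight_ge0.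
by rewrite -/(pweight_sum j) IH // -EFinM mulrC.
Qed.

Lemma pweight_sum_rec k : (0 < k)%N ->
  (forall j, (j < k)%N -> pweight_sum j = (qterm x u j)%:E) ->
  let c := u ^+ k * x ^+ (k ^ 2) in
  pweight_sum k = (c / (1 - c) * \sum_(0 <= j < k) qterm x u j / qpoch q (k - j))%:E.
Proof.
move=> hk IH c; set G := \sum_(0 <= j < k) _.
have c_ge0 : 0 <= c by exact: rect_ratio_ge0.
have G_ge0 : 0 <= G by rewrite sumr_ge0 // => j _; rewrite divr_ge0 ?qterm_ge0 ?ltW ?qpoch_gt0.
rewrite /pweight_sum (reindex_esum _ _ _ _ (add_rect_bij hk)) /=.
transitivity (\esum_(s in [set s | (0 < s)%N]) \esum_(v in \bigcup_(j in `I_k) parts_eq j)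
    ((c ^+ s)%:E * (pweight q u v / qpoch q (k - size v))%:E))%E.
  rewrite esum_esum => [|s v _ _]; last first.
    by rewrite -EFinM lee_fin mulr_ge0 ?exprn_ge0 // divr_ge0 ?pweight_ge0 ?ltW ?qpoch_gt0.
  apply: eq_esum => [[s v]] [hs [j hj [/andP [_ hv] hsz]]].
  rewrite pweight_add_rect //=; last by rewrite hsz; apply: ltnW.
  rewrite -EFinM /c /x exprVn.
  by congr EFin; ring.
transitivity (\esum_(s in [set s | (0 < s)%N]) (G%:E * (c ^+ s)%:E))%E.
  apply: eq_esum => s _; rewrite esumZl ?exprn_ge0 //; last first.
    by move=> v _; rewrite lee_fin divr_ge0 ?pweight_ge0 ?ltW ?qpoch_gt0.
  by rewrite esum_parts_lt // muleC.
rewrite esumZl //; last by move=> s _; rewrite lee_fin exprn_ge0.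
by rewrite esum_geometric_pos ?c_ge0 ?rect_ratio_lt1 // -EFinM mulrC.
Qed.

Lemma pweight_sumE k : pweight_sum k = (qterm x u k)%:E.
Proof.
elim/ltn_ind: k => -[_|k IH]; first exact: pweight_sum0.
rewrite pweight_sum_rec //; congr EFin.
have c_lt1 := rect_ratio_lt1 (ltn0Sn k).
under eq_big_nat => j _ do rewrite qpoch_qfact.
rewrite mulrAC -qterm_rec => [|n|n]; last 2 first.
- exact: lt0r_neq0 (qfact_gt0 n).
- exact: lt0r_neq0 (qrange_gt0 0 n).
by field; rewrite subr_eq0 eq_sym lt_eqF.
Qed.

Lemma Nuq_pweight k l : (0 < k)%N -> parts_eq k l ->
  Nuq u q l = qinf u q * (q ^+ k - 1) / u * pweight q u l.
Proof.
move=> hk hl; have := psize_gt0 hk hl; case: hl => hl <-.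
rewrite /Nuq /pweight -/(pdenom q l (psize l)) pconj1 //.
case: (psize l) => [|p] // _; rewrite exprS /=.
by rewrite [RHS]mulrA; congr (_ / _); field; rewrite lt0r_neq0.
Qed.

Lemma qinf_ge0 : 0 <= qinf u q.
Proof.
set a := fun n => \prod_(1 <= r < n.+1) (1 - u / q ^+ r).
have a_ge0 n : 0 <= a n by rewrite /a -qrange_qinv ltW ?qrange_gt0.
have a_noninc : nonincreasing_seq a.
  apply/nonincreasing_seqP => n; rewrite /a big_nat_recr //= -[leRHS]mulr1.
  by rewrite ler_wpM2l // ?a_ge0 // lerBlDr lerDl divr_ge0 ?exprn_ge0 ?ltW ?q_gt0.
have : cvgn a by apply: nonincreasing_is_cvgn => //; exists 0 => _ [n _ <-].
by move=> /limr_ge; apply; exact: nearW.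
Qed.

Lemma esum_Nuq k : (0 < k)%N ->
  \esum_(l in parts_eq k) (Nuq u q l)%:E = (qinf u q * (q ^+ k - 1) / u * qterm x u k)%:E.
Proof.
move=> hk; rewrite EFinM -pweight_sumE -esumZl.
- by apply: eq_esum => l hl; rewrite -EFinM (Nuq_pweight hk hl).
- apply: divr_ge0; last exact: ltW.
  by apply: mulr_ge0; [exact: qinf_ge0 | rewrite subr_ge0 exprn_ege1 // ltW].
- by move=> l _; rewrite lee_fin pweight_ge0.
Qed.

Lemma qterm_affine_order n :
  qinf u q * (q ^+ n.+1 - 1) / u * qterm x u n.+1
  = u ^+ n / affine_order n q * (qinf u q / qrange x u 0 n.+1).
Proof.
have q_neq0 : q != 0 by rewrite lt0r_neq0 ?q_gt0.
have qn_neq1 : q ^+ n.+1 - 1 != 0 by rewrite subr_eq0 gt_eqF // exprn_egt1.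
have -> : affine_order n q = q ^+ (n.+1 ^ 2) * qpoch q n.+1 / (q ^+ n.+1 - 1).
  by rewrite -affine_orderE // [_ * affine_order n q]mulrC mulfK.
rewrite /qterm -qpoch_qfact /x exprVn (exprS u).
by field; rewrite qn_neq1 expf_neq0 // !lt0r_neq0 ?qrange_gt0 ?qpoch_gt0.
Qed.

End PartitionSums.

Theorem theorem4p2 (R : realType) (q u : R) (k : nat) :
  1 < q -> 0 < u -> u < 1 -> (1 <= k)%N ->
  \esum_(l in [set l : seq nat | is_partition l /\ pconj l 1 = k]) (Nuq u q l)%:E
  = ((u ^+ (k - 1) / affine_order (k - 1) q)
     * (qinf u q / \prod_(1 <= r < k.+1) (1 - u / q ^+ r)))%:E.
Proof.
move=> q_gt1 u_gt0 u_lt1 k_gt0.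
rewrite -parts_eqE esum_Nuq //; case: k k_gt0 => // n _.
by rewrite subn1 -qrange_qinv qterm_affine_order.
Qed.
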